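(* The relation $\{(\rho,\pi):\rho=[n]\text{ for some }n\ge1\text{ and }n\text{ is a part of }\pi\}$ is $\Pi_2$-definable in $\mathbf Y^*=\langle\mathcal P,\le,[1]+[1]\rangle$.
   Context: $\mathcal P$ is the set of all integer partitions, including the empty partition; a partition is a nonincreasing finite sequence of positive integers (its parts). $[n]$ denotes the partition with a single part $n$. Young's lattice $\mathbf Y=\langle\mathcal P,\le\rangle$ has $(s_1,\dots,s_r)\le(n_1,\dots,n_t)$ iff $r\le t$ and $s_i\le n_i$ for all $i\le r$; $\mathbf Y^*$ is $\mathbf Y$ with a constant symbol for the partition $[1]+[1]=(1,1)$. A relation is $\Pi_n$-definable if it is defined by a first-order formula in the language $\{\le,(1,1)\}$ in prenex form with $n$ alternating quantifier blocks, the outermost universal, and a quantifier-free matrix. *)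

From mathcomp Require Import all_boot.
Set Implicit Arguments. Unset Strict Implicit. Unset Printing Implicit Defensive.

Definition is_partition (s : seq nat) : bool :=
  sorted geq s && all (fun x => 0 < x) s.

Record partition := Partition { parts : seq nat; _ : is_partition parts }.

Definition young_le (p q : partition) : Prop :=
  size (parts p) <= size (parts q) /\
  forall i, i < size (parts p) -> nth 0 (parts p) i <= nth 0 (parts q) i.

(* The constant [1]+[1] = (1,1). *)
Lemma is_partition_11 : is_partition [:: 1; 1]. Proof. by []. Qed.
Definition part11 : partition := Partition is_partition_11.

Inductive term := TVar of nat | TConst.

Inductive qf :=
  | QLe of term & term
  | QEq of term & term
  | QNot of qf
  | QAnd of qf & qf
  | QOr of qf & qf.

Definition env := nat -> partition.

Definition eval_term (e : env) (t : term) : partition :=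
  match t with TVar x => e x | TConst => part11 end.

Fixpoint sat_qf (e : env) (f : qf) : Prop :=
  match f with
  | QLe a b => young_le (eval_term e a) (eval_term e b)
  | QEq a b => eval_term e a = eval_term e b
  | QNot g => ~ sat_qf e g
  | QAnd g h => sat_qf e g /\ sat_qf e h
  | QOr g h => sat_qf e g \/ sat_qf e h
  end.

Definition upd (e : env) (x : nat) (p : partition) : env :=
  fun y => if y == x then p else e y.

Fixpoint sat_forall (xs : seq nat) (e : env) (P : env -> Prop) : Prop :=
  match xs with
  | [::] => P e
  | x :: xs' => forall p : partition, sat_forall xs' (upd e x p) P
  end.

Fixpoint sat_exists (xs : seq nat) (e : env) (P : env -> Prop) : Prop :=
  match xs with
  | [::] => P e
  | x :: xs' => exists p : partition, sat_exists xs' (upd e x p) P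
  end.

Record pi2_formula := Pi2 { pi2_univ : seq nat; pi2_exist : seq nat; pi2_matrix : qf }.

Definition sat_pi2 (e : env) (f : pi2_formula) : Prop :=
  sat_forall (pi2_univ f) e
    (fun e1 => sat_exists (pi2_exist f) e1 (fun e2 => sat_qf e2 (pi2_matrix f))).

Definition pi2_definable2 (R : partition -> partition -> Prop) : Prop :=
  exists f : pi2_formula, forall e : env, sat_pi2 e f <-> R (e 0) (e 1).

Definition single_part_rel (rho pi : partition) : Prop :=
  exists n, 1 <= n /\ parts rho = [:: n] /\ n \in parts pi.

From Pilot Require Import Defs.
From mathcomp Require Import all_boot zify.
From Stdlib Require Import Classical.
Set Implicit Arguments. Unset Strict Implicit. Unset Printing Implicit Defensive.

(* Read a partition p as the nonincreasing function i |-> p_i (0 beyond the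
   length); Young's order is then the pointwise order.  The combinatorial core
   (mem_parts_rect) is that n = m+1 is a part of pi iff for every k,
   (m+2)^k <= pi implies (m+1)^(k+1) <= pi, where a^k is the k x a rectangle.
   The quantities in this criterion are pinned down in Y* by first-order means:
   rows are the partitions not above (1,1), columns are the partitions whose
   down-set is a chain and which are comparable with (1,1), and "c contains
   every strict lower bound of d" expresses covering. *)

Notation "p <=Y q" := (young_le p q) (at level 70).

Definition young_lt (p q : Defs.partition) : Prop := p <=Y q /\ p <> q.
Notation "p <Y q" := (young_lt p q) (at level 70).

Definition part (p : Defs.partition) (i : nat) : nat := nth 0 (parts p) i.

Lemma partition_wf (p : Defs.partition) : is_partition (parts p).
Proof. by case: p. Qed.

Lemma part_default p i : size (parts p) <= i -> part p i = 0.
Proof. exact: nth_default. Qed.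

Lemma part_posE p i : (0 < part p i) = (i < size (parts p)).
Proof.
have /andP[_ /all_nthP pos] := partition_wf p.
by case: (ltnP i (size (parts p))) => hi; [rewrite pos | rewrite part_default].
Qed.

Lemma part_mono p i j : i <= j -> part p j <= part p i.
Proof.
move=> le_ij; have /andP[srt _] := partition_wf p.
case: (ltnP j (size (parts p))) => hj; last by rewrite part_default.
have tr : transitive geq by move=> x y z h1 h2; apply: leq_trans h2 h1.
have rf : reflexive geq by move=> x; apply: leqnn.
have hi : i < size (parts p) by apply: leq_ltn_trans hj.
by rewrite /part; exact: (sorted_leq_nth tr rf 0 srt i j hi hj le_ij).
Qed.

Lemma young_leE p q : p <=Y q <-> forall i, part p i <= part q i.
Proof.
split=> [[_ le_pq] i | le_pq].
  by case: (ltnP i (size (parts p))) => hi; [apply: le_pq | rewrite part_default].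
split=> [|i _]; last exact: le_pq.
rewrite leqNgt -part_posE -leqNgt.
by have := le_pq (size (parts q)); rewrite [part q _]part_default.
Qed.

Lemma young_le_trans p q s : p <=Y q -> q <=Y s -> p <=Y s.
Proof.
move=> /young_leE pq /young_leE qs; apply/young_leE => i.
exact: leq_trans (pq i) (qs i).
Qed.

Lemma partition_eq p q : (forall i, part p i = part q i) -> p = q.
Proof.
move=> pq.
have lt_size i : (i < size (parts p)) = (i < size (parts q)) by rewrite -!part_posE pq.
have size_eq : size (parts p) = size (parts q).
  case: (ltngtP (size (parts p)) (size (parts q))) => // hs.
  - by have := lt_size (size (parts p)); rewrite hs ltnn.
  - by have := lt_size (size (parts q)); rewrite hs ltnn.
have parts_eq : parts p = parts q by apply: (eq_from_nth size_eq) => i _; apply: pq.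
case: p q parts_eq {pq lt_size size_eq} => s ws [t wt] /= st; subst t.
by rewrite (bool_irrelevance ws wt).
Qed.

Lemma young_lt_part0 p q : p <Y q -> 0 < part q 0.
Proof.
move=> [/young_leE le_pq ne_pq]; rewrite lt0n; apply/eqP => q0; apply: ne_pq.
apply: partition_eq => i; have := le_pq i; have := part_mono q (leq0n i); lia.
Qed.

Lemma rect_wf a k : is_partition (nseq k a.+1).
Proof.
rewrite /is_partition all_nseq orbT andbT.
by elim: k => [|[|k] IH] //=; rewrite leqnn.
Qed.

Definition rect (a k : nat) : Defs.partition := Partition (rect_wf a k).

Lemma part_rect a k i : part (rect a k) i = if i < k then a.+1 else 0.
Proof. exact: nth_nseq. Qed.

Lemma size_rect a k : size (parts (rect a k)) = k.
Proof. exact: size_nseq. Qed.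

Lemma rect_le a k q : rect a k <=Y q <-> (0 < k -> a < part q k.-1).
Proof.
split=> [/young_leE le_q k_gt0 | H].
  by have := le_q k.-1; rewrite part_rect prednK // leqnn.
apply/young_leE => i; rewrite part_rect; case: ifP => // lt_ik.
apply: leq_trans (H (leq_ltn_trans (leq0n i) lt_ik)) (part_mono _ _).
by rewrite -ltnS prednK // (leq_ltn_trans (leq0n i) lt_ik).
Qed.

Lemma le_rect p a k : p <=Y rect a k <-> part p 0 <= a.+1 /\ size (parts p) <= k.
Proof.
split=> [le_p | [le_p0 le_size]].
  split; first by have := proj1 (young_leE _ _) le_p 0; rewrite part_rect; case: ifP; lia.
  by rewrite -(size_rect a k); case: le_p.
apply/young_leE => i; rewrite part_rect.
case: (ltnP i (size (parts p))) => hi; last by rewrite part_default.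
by rewrite ifT; [apply: leq_trans (part_mono _ _) le_p0 | lia].
Qed.

Lemma rect_le_rect a k b l : rect a k <=Y rect b l <-> (0 < k -> a <= b /\ k <= l).
Proof. rewrite rect_le part_rect; case: ifP; lia. Qed.

Lemma rect_neq a k b l : 0 < k -> a <> b -> rect a k <> rect b l.
Proof.
move=> k_gt0 ne_ab /(congr1 (part^~ 0)); rewrite !part_rect k_gt0.
by case: ifP => _; lia.
Qed.

Lemma part11_rect : part11 = rect 0 2.
Proof. by apply: partition_eq => -[|[|i]]. Qed.

(* Rows, i.e. partitions with at most one part, are those not above (1,1). *)
Definition is_row (p : Defs.partition) : Prop := ~ part11 <=Y p.

Lemma is_row_part p i : is_row p -> 0 < i -> part p i = 0.
Proof.
move=> row_p i_gt0; apply/eqP; rewrite -leqn0 leqNgt; apply/negP => pi_gt0.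
apply: row_p; rewrite part11_rect; apply/rect_le => _ /=.
exact: leq_trans pi_gt0 (part_mono _ i_gt0).
Qed.

Lemma is_row_rect p : is_row p -> 0 < part p 0 -> p = rect (part p 0).-1 1.
Proof.
move=> row_p p0_gt0; apply: partition_eq => -[|i]; rewrite part_rect /=; first lia.
exact: is_row_part.
Qed.

Lemma rect_is_row a : is_row (rect a 1).
Proof. by rewrite /is_row part11_rect rect_le_rect; lia. Qed.

Lemma row_above a s : is_row s -> rect a 1 <Y s -> rect a.+1 1 <=Y s.
Proof.
move=> row_s [/rect_le /(_ isT) lt_as ne_as]; apply/rect_le => _ /=.
rewrite ltn_neqAle lt_as andbT; apply/eqP => s0E; apply: ne_as.
have s0_gt0 : 0 < part s 0 by rewrite -s0E.
by rewrite [RHS](is_row_rect row_s s0_gt0) -s0E.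
Qed.

(* c contains every strict lower bound of d; for c < d this says d covers c. *)
Definition below_all (c d : Defs.partition) : Prop := forall t, t <Y d -> t <=Y c.

Lemma row_cover a : below_all (rect a 1) (rect a.+1 1).
Proof.
move=> t [/le_rect [t0 t_size] ne_t]; apply/le_rect; split=> //.
rewrite leq_eqVlt in t0; case/orP: t0 => // /eqP t0; case: ne_t.
by apply: partition_eq => -[|i]; rewrite part_rect //= part_default //; lia.
Qed.

Lemma row_cover_inv m s :
  is_row s -> rect m 1 <Y s -> below_all (rect m 1) s -> s = rect m.+1 1.
Proof.
move=> row_s lt_ms cover.
case: (classic (rect m.+1 1 = s)) => [-> // | ne_s].
have := cover _ (conj (row_above row_s lt_ms) ne_s).
by rewrite rect_le_rect; lia.
Qed.

Definition is_column (p : Defs.partition) : Prop := part p 0 <= 1.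

Lemma column_le c q : is_column c -> size (parts c) <= size (parts q) -> c <=Y q.
Proof.
move=> col_c le_size; apply/young_leE => i.
case: (ltnP i (size (parts c))) => hi; last by rewrite part_default.
have : 0 < part q i by rewrite part_posE; lia.
by have := part_mono c (leq0n i); rewrite /is_column in col_c; lia.
Qed.

Lemma is_column_rect c : is_column c -> c = rect 0 (size (parts c)).
Proof.
move=> col_c; apply/partition_eq => i; rewrite part_rect.
case: ifP => hi; last by rewrite part_default // leqNgt hi.
have : 0 < part c i by rewrite part_posE.
by have := part_mono c (leq0n i); rewrite /is_column in col_c; lia.
Qed.

Lemma column_cover k : below_all (rect 0 k) (rect 0 k.+1).
Proof.
move=> t [/le_rect [t0 t_size] ne_t]; apply/le_rect; split=> //.
rewrite leq_eqVlt in t_size; case/orP: t_size => // /eqP t_size; case: ne_t.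
by rewrite [LHS]is_column_rect // t_size.
Qed.

Definition chain_below (c : Defs.partition) : Prop :=
  forall a b, a <=Y c -> b <=Y c -> a <=Y b \/ b <=Y a.

(* The first-order description of columns used by the formula. *)
Definition column_like (c : Defs.partition) : Prop :=
  chain_below c /\ (part11 <=Y c \/ c <=Y part11).

(* A first part >= 2 makes c either a row of length >= 2, incomparable with
   (1,1), or puts the incomparable [2] and (1,1) below c. *)
Lemma column_like_column c : column_like c -> is_column c.
Proof.
case=> chain_c cmp_c; rewrite /is_column leqNgt; apply/negP => c0_gt1.
case: (posnP (part c 1)) => c1.
- by case: cmp_c; rewrite part11_rect ?rect_le ?le_rect /=; lia.
- have [] := chain_c (rect 1 1) part11; rewrite ?part11_rect ?rect_le ?part_rect //=; lia.
Qed.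

Lemma rect_column_like k : column_like (rect 0 k).
Proof.
have col_below t : t <=Y rect 0 k -> is_column t by case/le_rect.
split; last by rewrite part11_rect !rect_le_rect; lia.
move=> a b /col_below col_a /col_below col_b.
by case: (leqP (size (parts a)) (size (parts b))) => h; [left | right];
   apply: column_le => //; lia.
Qed.

Lemma mem_parts_rect m pi :
  m.+1 \in parts pi <-> forall k, rect m.+1 k <=Y pi -> rect m k.+1 <=Y pi.
Proof.
split=> [mem_m k /rect_le big_k | step].
  have idxE : part pi (index m.+1 (parts pi)) = m.+1 := nth_index 0 mem_m.
  have le_k_idx : k <= index m.+1 (parts pi).
    rewrite leqNgt; apply/negP => lt_idx.
    have le_idx : index m.+1 (parts pi) <= k.-1 by lia.
    have := big_k (leq_ltn_trans (leq0n _) lt_idx).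
    by have := part_mono pi le_idx; rewrite idxE; lia.
  by apply/rect_le => _ /=; rewrite -idxE; apply: part_mono.
have small_exists : exists i, part pi i <= m.+1.
  by exists (size (parts pi)); rewrite part_default.
case: (ex_minnP small_exists) => k small_k min_k.
have /rect_le /(_ isT) /= big_k : rect m k.+1 <=Y pi.
  by apply: step; apply/rect_le => k_gt0; rewrite ltnNge; apply/negP => /min_k; lia.
have k_in : k < size (parts pi) by rewrite -part_posE; lia.
have -> : m.+1 = nth 0 (parts pi) k by rewrite -/(part pi k); lia.
exact: mem_nth.
Qed.

(* The semantic content of the formula: r is a nonempty row [m+1], and for
   s1 = [m+2], any row s2 above it, any column c2 (of height j) and any c1
   containing the column of height j-1, if pi contains everything avoiding s2
   and c1 (that is, (m+2)^(j-2)) then pi contains every Y avoiding s1 and c2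
   (that is, everything below (m+1)^(j-1)). *)
Definition part_condition (r pi : Defs.partition) : Prop :=
  is_row r /\ (exists w, w <Y r) /\
  forall s1 s2 c1 c2 Y,
    is_row s1 -> r <Y s1 -> below_all r s1 ->
    is_row s2 -> s1 <Y s2 ->
    column_like c2 -> below_all c1 c2 ->
    (forall y, ~ s2 <=Y y -> ~ c1 <=Y y -> y <=Y pi) ->
    ~ s1 <=Y Y -> ~ c2 <=Y Y -> Y <=Y pi.

(* Soundness: instantiating with the rectangles s1 = [m+2], s2 = [m+3],
   c1, c2 = columns of heights k+1, k+2 and Y = (m+1)^(k+1) yields the
   criterion of mem_parts_rect. *)
Lemma part_condition_sound r pi : part_condition r pi -> single_part_rel r pi.
Proof.
move=> [row_r [[w lt_w] cond]].
have r0_gt0 := young_lt_part0 lt_w.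
set m := (part r 0).-1; have rE : r = rect m 1 := is_row_rect row_r r0_gt0.
exists m.+1; split=> //; split; first by rewrite rE.
apply/mem_parts_rect => k big_k.
apply: (cond (rect m.+1 1) (rect m.+2 1) (rect 0 k.+1) (rect 0 k.+2)); rewrite ?rE.
- exact: rect_is_row.
- by split; [apply/rect_le_rect; lia | apply: rect_neq; lia].
- exact: row_cover.
- exact: rect_is_row.
- by split; [apply/rect_le_rect; lia | apply: rect_neq; lia].
- exact: rect_column_like.
- exact: column_cover.
- move=> y not_s2 not_c1; apply: young_le_trans big_k; apply/le_rect; split.
    by rewrite leqNgt; apply/negP => y0; apply: not_s2; apply/rect_le.
  by rewrite leqNgt; apply/negP => y_size; apply: not_c1; apply/rect_le => _; rewrite part_posE.
- by rewrite rect_le_rect; lia.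
- by rewrite rect_le_rect; lia.
Qed.

(* Completeness: the premises force s1 = [m+2], [m+3] <= s2, c2 = 1^j and
   1^(j-1) <= c1, so the criterion with k = j-2 bounds Y by (m+1)^(j-1). *)
Lemma part_condition_complete r pi : single_part_rel r pi -> part_condition r pi.
Proof.
case=> n [n_gt0 [r_parts mem_n]].
have rE : r = rect n.-1 1.
  by apply: partition_eq => -[|[|i]]; rewrite part_rect /part r_parts //=; lia.
move: mem_n; rewrite (_ : n = n.-1.+1); last by lia.
move: {n n_gt0 r_parts} n.-1 rE => m -> mem_m.
split; first exact: rect_is_row.
split; first by exists (rect 0 0); split; [apply/rect_le_rect | move/(congr1 (size \o parts))].
move=> s1 s2 c1 c2 Y row_s1 lt_s1 cover_s1 row_s2 lt_s2 col_c2 cover_c2 fill not_s1 not_c2.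
have s1E := row_cover_inv row_s1 lt_s1 cover_s1; subst s1.
have le_s2 := row_above row_s2 lt_s2.
have c2E := is_column_rect (column_like_column col_c2).
set j := size (parts c2) in c2E.
apply: (@young_le_trans _ (rect m j.-1)).
  apply/le_rect; split.
    by rewrite leqNgt; apply/negP => Y0; apply: not_s1; apply/rect_le.
  have : size (parts Y) < j.
    rewrite ltnNge; apply/negP => le_j; apply: not_c2.
    by apply: column_le; first exact: column_like_column.
  lia.
case: (leqP j 1) => [le_j1 | lt_1j]; first by apply/rect_le; lia.
have -> : j.-1 = j.-2.+1 by lia.
apply: (proj1 (mem_parts_rect _ _) mem_m); apply: fill => le_rect_y.
- by have := young_le_trans le_s2 le_rect_y; rewrite rect_le_rect; lia.
- have le_c1 : rect 0 j.-1 <=Y c1.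
    apply: cover_c2; rewrite c2E; split; first by apply/rect_le_rect; lia.
    by move/(congr1 (size \o parts)) => /=; rewrite !size_rect; lia.
  by have := young_le_trans le_c1 le_rect_y; rewrite rect_le_rect; lia.
Qed.

Definition QLt (a b : term) : qf := QAnd (QLe a b) (QNot (QEq a b)).
Definition QRow (a : term) : qf := QNot (QLe TConst a).
Definition QOrs (fs : seq qf) (g : qf) : qf := foldr QOr g fs.

(* Free variables r, pi; universal s1 s2 c1 c2 Y; existential witnesses
   t (cover), a b (chain), u (column cover), y (fill), w (nonemptiness). *)
Definition vr := TVar 0.
Definition vpi := TVar 1.
Definition vs1 := TVar 2.
Definition vs2 := TVar 3.
Definition vc1 := TVar 4.
Definition vc2 := TVar 5.
Definition vY := TVar 6.
Definition vt := TVar 7.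
Definition va := TVar 8.
Definition vb := TVar 9.
Definition vu := TVar 10.
Definition vy := TVar 11.
Definition vw := TVar 12.

(* The matrix: r is a nonempty row, and some premise of part_condition fails
   (with a witness for the universal premises) or the conclusion holds. *)
Definition matrix_formula : qf :=
  QAnd (QRow vr) (QAnd (QLt vw vr) (QOrs [::
    QNot (QRow vs1); QNot (QLt vr vs1); QAnd (QLt vt vs1) (QNot (QLe vt vr));
    QNot (QRow vs2); QNot (QLt vs1 vs2);
    QAnd (QLe va vc2) (QAnd (QLe vb vc2) (QNot (QOr (QLe va vb) (QLe vb va))));
    QNot (QOr (QLe TConst vc2) (QLe vc2 TConst));
    QAnd (QLt vu vc2) (QNot (QLe vu vc1));
    QAnd (QNot (QLe vs2 vy)) (QAnd (QNot (QLe vc1 vy)) (QNot (QLe vy vpi)));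
    QLe vs1 vY; QLe vc2 vY] (QLe vY vpi))).

Definition part_formula : pi2_formula :=
  Pi2 [:: 2; 3; 4; 5; 6] [:: 7; 8; 9; 10; 11; 12] matrix_formula.

Definition refutation (r pi s1 s2 c1 c2 Y t a b u y : Defs.partition) : Prop :=
  ~ is_row s1 \/ ~ r <Y s1 \/ (t <Y s1 /\ ~ t <=Y r) \/
  ~ is_row s2 \/ ~ s1 <Y s2 \/
  (a <=Y c2 /\ b <=Y c2 /\ ~ (a <=Y b \/ b <=Y a)) \/
  ~ (part11 <=Y c2 \/ c2 <=Y part11) \/
  (u <Y c2 /\ ~ u <=Y c1) \/
  (~ s2 <=Y y /\ ~ c1 <=Y y /\ ~ y <=Y pi) \/
  s1 <=Y Y \/ c2 <=Y Y \/ Y <=Y pi.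

Definition matrix_prop (r pi s1 s2 c1 c2 Y t a b u y w : Defs.partition) : Prop :=
  is_row r /\ w <Y r /\ refutation r pi s1 s2 c1 c2 Y t a b u y.

Lemma sat_part_formula e : sat_pi2 e part_formula <->
  forall s1 s2 c1 c2 Y, exists t a b u y w, matrix_prop (e 0) (e 1) s1 s2 c1 c2 Y t a b u y w.
Proof. exact: iff_refl. Qed.

(* Prenexing: pulling the universal premises of part_condition out as
   existential witnesses of their failure is sound classically. *)
Lemma matrix_prenex r pi :
  (forall s1 s2 c1 c2 Y, exists t a b u y w, matrix_prop r pi s1 s2 c1 c2 Y t a b u y w)
  <-> part_condition r pi.
Proof.
split=> [H | [row_r [[w lt_w] cond]] s1 s2 c1 c2 Y].
  have [_ [_ [_ [_ [_ [w [row_r [lt_w _]]]]]]]] := H r r r r r.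
  split=> //; split; first by exists w.
  move=> s1 s2 c1 c2 Y row_s1 lt_s1 cover_s1 row_s2 lt_s2 [chain_c2 cmp_c2] cover_c2 fill.
  have [t [a [b [u [y [_ [_ [_ ref]]]]]]]] := H s1 s2 c1 c2 Y.
  have := cover_s1 t; have := chain_c2 a b; have := cover_c2 u; have := fill y.
  by rewrite /refutation in ref; tauto.
apply: NNPP => none.
have escape t a b u y : ~ refutation r pi s1 s2 c1 c2 Y t a b u y.
  by move=> ref; apply: none; exists t, a, b, u, y, w.
have avoid t a b u y (P : Prop) : (~ P -> refutation r pi s1 s2 c1 c2 Y t a b u y) -> P.
  by move=> ref; apply: NNPP => /ref; apply: escape.
apply: (escape r r r r r); rewrite /refutation; do 11 right.
apply: (cond s1 s2 c1 c2 Y).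
- by apply: (avoid r r r r r) => ?; rewrite /refutation; left.
- by apply: (avoid r r r r r) => ?; rewrite /refutation; right; left.
- by move=> t ?; apply: (avoid t r r r r) => ?; rewrite /refutation; do 2 right; left; split.
- by apply: (avoid r r r r r) => ?; rewrite /refutation; do 3 right; left.
- by apply: (avoid r r r r r) => ?; rewrite /refutation; do 4 right; left.
- split; first by move=> a b ? ?; apply: (avoid r a b r r) => ?; rewrite /refutation; do 5 right; left.
  by apply: (avoid r r r r r) => ?; rewrite /refutation; do 6 right; left.
- by move=> u ?; apply: (avoid r r r u r) => ?; rewrite /refutation; do 7 right; left; split.
- by move=> y ? ?; apply: (avoid r r r r y) => ?; rewrite /refutation; do 8 right; left.
- by move=> ?; apply: (escape r r r r r); rewrite /refutation; do 9 right; left.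
- by move=> ?; apply: (escape r r r r r); rewrite /refutation; do 10 right; left.
Qed.

Theorem proposition3p6 : pi2_definable2 single_part_rel.
Proof.
exists part_formula => e; rewrite sat_part_formula matrix_prenex.
split; [exact: part_condition_sound | exact: part_condition_complete].
Qed.
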